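(* Let $M$ be a loopless matroid on ground set $S$ and consider a standard coloring of $M$. Let $Z\subseteq S$ be a subset such that exactly $r_M(Z)$ colors appear in $Z$. Then the coloring restricted to $Z$ is a standard coloring of $M|Z$.
   Context: A coloring is a partition of the ground set into nonempty color classes. A coloring of a rank-$r$ matroid $N$ with color classes $S_1,\dots,S_r$ (so exactly $r$ colors) is standard if, after possibly reindexing the classes, $S_i$ is a cut of the restriction $N|(S_1\cup\dots\cup S_i)$ for every $i=1,\dots,r$, where a cut is an inclusionwise minimal subset of the ground set intersecting every basis. *)

From mathcomp Require Import all_boot.
Set Implicit Arguments. Unset Strict Implicit. Unset Printing Implicit Defensive.

Section Matroids.
Variable T : finType.

Definition is_matroid (E : {set T}) (I : {set {set T}}) : Prop :=
  [/\ forall A : {set T}, A \in I -> A \subset E,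
      set0 \in I,
      forall A B : {set T}, A \in I -> B \subset A -> B \in I
    & forall A B : {set T}, A \in I -> B \in I -> #|A| < #|B| ->
        exists2 x, x \in B :\: A & x |: A \in I].

Definition loopless (E : {set T}) (I : {set {set T}}) : Prop :=
  forall x, x \in E -> [set x] \in I.

Definition rank (I : {set {set T}}) (X : {set T}) : nat :=
  \max_(A in I | A \subset X) #|A|.

Definition restrict (I : {set {set T}}) (Z : {set T}) : {set {set T}} :=
  [set A in I | A \subset Z].

Definition basis (I : {set {set T}}) (X : {set T}) (B : {set T}) : bool :=
  maxset (fun A : {set T} => (A \in I) && (A \subset X)) B.

Definition cut (I : {set {set T}}) (X : {set T}) (C : {set T}) : bool :=
  minset (fun D : {set T} => (D \subset X) &&
            [forall B : {set T}, basis I X B ==> ~~ [disjoint D & B]]) C.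

Definition coloring (E : {set T}) (P : {set {set T}}) : bool := partition P E.

Definition standard_coloring (E : {set T}) (I : {set {set T}})
    (P : {set {set T}}) : Prop :=
  [/\ coloring E P,
      #|P| = rank I E
    & exists s : seq {set T},
        [/\ uniq s, P = [set A in s] &
            forall i, i < size s ->
              cut I (\bigcup_(j < i.+1) nth set0 s j) (nth set0 s i)]].

Definition restrict_coloring (P : {set {set T}}) (Z : {set T}) : {set {set T}} :=
  [set A :&: Z | A in P & ~~ [disjoint A & Z]].

Definition colors_in (P : {set {set T}}) (Z : {set T}) : {set {set T}} :=
  [set A in P | ~~ [disjoint A & Z]].

End Matroids.

From mathcomp Require Import all_boot zify.
Set Implicit Arguments. Unset Strict Implicit. Unset Printing Implicit Defensive.

(* List the colour classes in a standard order S_1, ..., S_r with prefix unions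
   U_i.  As S_i is a cut of M|U_i disjoint from U_(i-1), submodularity shows
   that adding any element of S_i to a subset of U_(i-1) raises its rank.  So
   the rank of Z :&: U_i grows strictly at every colour met by Z, and the
   number of colours met by Z is at most r(Z).  When it equals r(Z), each such
   step raises the rank by exactly one, which makes the trace S_i :&: Z a cut
   of M|(Z :&: U_i); the traces thus form a standard colouring of M|Z. *)

Notation pairwise_disjoint := (pairwise [rel A B : {set _} | [disjoint A & B]]).

Section MatroidRank.
Variables (T : finType) (E : {set T}) (I : {set {set T}}).
Hypothesis matroidEI : is_matroid E I.
Implicit Types (X Y A B C D J K : {set T}) (x : T).

Lemma leq_card_rank X A : A \in I -> A \subset X -> #|A| <= rank I X.
Proof.
move=> AI AX; apply: (leq_bigmax_cond (P := fun A => (A \in I) && (A \subset X))).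
by rewrite AI AX.
Qed.

Lemma rankS X Y : X \subset Y -> rank I X <= rank I Y.
Proof.
move=> XY; apply/bigmax_leqP => A /andP[AI AX].
by apply: leq_card_rank (subset_trans AX XY).
Qed.

Lemma rank_witness X : exists2 A, (A \in I) && (A \subset X) & #|A| = rank I X.
Proof.
have [_ I0 _ _] := matroidEI.
have P0 : (set0 \in I) && (set0 \subset X) by rewrite I0 sub0set.
rewrite /rank (bigmax_eq_arg (P := fun A => (A \in I) && (A \subset X)) _ P0).
by case: arg_maxnP => // A; exists A.
Qed.

Lemma extend_to_rank X J : J \in I -> J \subset X ->
  exists K, [/\ J \subset K, K \in I, K \subset X & #|K| = rank I X].
Proof.
have [_ _ _ augment] := matroidEI.
move eq_n: (rank I X - #|J|) => n; elim: n J eq_n => [|n IHn] J eq_n JI JX.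
  by exists J; split => //; have := leq_card_rank JI JX; lia.
have [A /andP[AI AX] cardA] := rank_witness X.
have [|x /setDP[xA xJ] xJI] := augment J A JI AI; first lia.
have [||K [JK KI KX cardK]] := IHn (x |: J) _ xJI.
- by rewrite cardsU1 xJ; lia.
- by rewrite subUset sub1set (subsetP AX).
by exists K; split => //; apply: subset_trans JK; apply: subsetUr.
Qed.

Lemma basisE X B : basis I X B = [&& B \in I, B \subset X & #|B| == rank I X].
Proof.
apply/maxsetP/and3P => [[/andP[BI BX] maxB] | [BI BX /eqP cardB]].
  have [K [BK KI KX <-]] := extend_to_rank BI BX.
  by rewrite -(maxB K) ?KI ?KX.
split=> [|B' /andP[B'I B'X] BB']; first by rewrite BI BX.
by apply/eqP; rewrite eq_sym eqEcard BB' cardB leq_card_rank.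
Qed.

Lemma meets_basesE X D :
  [forall B, basis I X B ==> ~~ [disjoint D & B]] = (rank I (X :\: D) < rank I X).
Proof.
apply/forallP/idP => [meets | ltXD B].
  rewrite ltnNge; apply/negP => leXD.
  have [A /andP[AI AXD] cardA] := rank_witness (X :\: D).
  move: AXD; rewrite subsetD => /andP[AX DA].
  have := meets A; rewrite basisE AI AX eqn_leq leq_card_rank //= cardA leXD.
  by rewrite disjoint_sym DA.
apply/implyP; rewrite basisE => /and3P[BI BX /eqP cardB]; apply: contraTN ltXD.
rewrite disjoint_sym -leqNgt -cardB => BD.
by apply: leq_card_rank BI _; rewrite subsetD BX.
Qed.

Lemma rank_submod X Y : rank I (X :|: Y) + rank I (X :&: Y) <= rank I X + rank I Y.
Proof.
have [_ _ hereditary _] := matroidEI.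
have [J /andP[JI JXY] cardJ] := rank_witness (X :&: Y).
have JU : J \subset X :|: Y.
  by apply: subset_trans JXY (subset_trans (subsetIl _ _) (subsetUl _ _)).
have [K [JK KI KU cardK]] := extend_to_rank JI JU.
have KX := leq_card_rank (hereditary _ _ KI (subsetIl K X)) (subsetIr K X).
have KY := leq_card_rank (hereditary _ _ KI (subsetIl K Y)) (subsetIr K Y).
have J_KXY : J \subset (K :&: X) :&: (K :&: Y) by rewrite -setIIr subsetI JK.
have := cardsUI (K :&: X) (K :&: Y); rewrite -setIUr (setIidPl KU).
have := subset_leq_card J_KXY; lia.
Qed.

Lemma cutE X C : cut I X C =
  [&& C \subset X, rank I (X :\: C) < rank I X
    & [forall x in C, rank I X <= rank I (x |: (X :\: C))]].
Proof.
rewrite /cut (minset_eq _ (fun D => congr1 _ (meets_basesE X D))).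
apply/minsetP/and3P => [[/andP[CX ltXC] minC] | [CX ltXC /forall_inP ge_x]].
  split=> //; apply/forall_inP => x xC; rewrite leqNgt; apply/negP => ltx.
  have XCx : X :\: (C :\ x) = x |: (X :\: C).
    by apply/setP => y; rewrite !inE; case: eqVneq => [->|_] //=; rewrite (subsetP CX).
  have := minC (C :\ x); rewrite XCx ltx subsetDl (subset_trans (subsetDl _ _) CX).
  by move=> /(_ isT isT)/setP/(_ x); rewrite !inE eqxx xC.
split=> [|D /andP[DX ltXD] DC]; first by rewrite CX.
apply/eqP; rewrite eqEsubset DC; apply/subsetP => x xC; apply: contraTT ltXD => xD.
have sub : x |: (X :\: C) \subset X :\: D.
  rewrite subUset sub1set !inE xD (subsetP CX) //=.
  by apply: setDS.
by rewrite -leqNgt (leq_trans (ge_x x xC) (rankS sub)).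
Qed.

Section CutOfExtension.
Variables U C : {set T}.
Hypotheses (CU : [disjoint C & U]) (cutC : cut I (U :|: C) C).

Lemma rank_lt_setU1_cut X y : X \subset U -> y \in C -> rank I X < rank I (y |: X).
Proof.
move=> XU yC; have := cutC; rewrite cutE => /and3P[_].
rewrite setDUl setDv setU0 (setDidPl (_ : [disjoint U & C])) 1?disjoint_sym //.
move=> ltU /forall_inP/(_ y yC) geU.
have yU : y \notin U by rewrite (disjointFr CU yC).
have := rank_submod (y |: X) U.
have -> : (y |: X) :|: U = y |: U by rewrite -setUA (setUidPr XU).
have -> : (y |: X) :&: U = X.
  by rewrite setIUl (setIidPl XU) (disjoint_setI0 _) ?set0U // disjoints1.
lia.
Qed.

Lemma rank_lt_setU_cut X D : X \subset U -> D \subset C -> D != set0 ->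
  rank I X < rank I (X :|: D).
Proof.
move=> XU DC /set0Pn[y yD].
apply: leq_trans (rank_lt_setU1_cut XU (subsetP DC y yD)) (rankS _).
by rewrite subUset sub1set in_setU yD orbT subsetUl.
Qed.

Lemma cut_setU_rank_succ X D : X \subset U -> D \subset C ->
  rank I (X :|: D) = (rank I X).+1 -> cut I (X :|: D) D.
Proof.
move=> XU DC rankXD.
have DX : [disjoint D & X].
  by apply: disjointWl DC _; apply: disjointWr XU CU.
rewrite cutE setDUl setDv setU0 (setDidPl (_ : [disjoint X & D])) 1?disjoint_sym //.
rewrite subsetUr rankXD ltnSn /=; apply/forall_inP => x xD.
exact: rank_lt_setU1_cut XU (subsetP DC x xD).
Qed.

End CutOfExtension.

End MatroidRank.

Section Restriction.
Variables (T : finType) (I : {set {set T}}) (Z : {set T}).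
Implicit Types (X A C : {set T}).

Lemma restrict_indep_sub X A : X \subset Z ->
  (A \in restrict I Z) && (A \subset X) = (A \in I) && (A \subset X).
Proof.
move=> XZ; rewrite inE -andbA.
by case AX: (A \subset X); rewrite ?andbF ?(subset_trans AX XZ).
Qed.

Lemma rank_restrict X : X \subset Z -> rank (restrict I Z) X = rank I X.
Proof. by move=> XZ; apply: eq_bigl => A; rewrite restrict_indep_sub. Qed.

Lemma cut_restrict X C : X \subset Z -> cut (restrict I Z) X C = cut I X C.
Proof.
move=> XZ; apply: minset_eq => D /=; congr (_ && _).
apply: eq_forallb => B; congr (_ ==> _).
by apply: maxset_eq => A /=; rewrite restrict_indep_sub.
Qed.

End Restriction.

Section StandardSequences.
Variables (T : finType) (I : {set {set T}}).
Implicit Types (s t : seq {set T}) (Z C : {set T}).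

Definition standard_seq s :=
  forall i, i < size s -> cut I (\bigcup_(j < i.+1) nth set0 s j) (nth set0 s i).

Lemma bigcup_rcons s C : \bigcup_(A <- rcons s C) A = (\bigcup_(A <- s) A) :|: C.
Proof. by rewrite -cats1 big_cat big_seq1. Qed.

Lemma bigcup_nth_take s n : \bigcup_(j < n) nth set0 s j = \bigcup_(A <- take n s) A.
Proof.
elim: n => [|n IHn]; first by rewrite big_ord0 take0 big_nil.
rewrite big_ord_recr /= IHn; case: (ltnP n (size s)) => [lt_n_s | le_s_n].
  by rewrite (take_nth set0 lt_n_s) bigcup_rcons.
by rewrite nth_default // !take_oversize ?setU0 // (leq_trans le_s_n).
Qed.

Lemma standard_seq_rcons s C :
  standard_seq (rcons s C) <-> standard_seq s /\ cut I ((\bigcup_(A <- s) A) :|: C) C.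
Proof.
have nthE i : i < size s -> nth set0 (rcons s C) i = nth set0 s i.
  by move=> lt_i_s; rewrite nth_rcons lt_i_s.
have prefixE i : i < size s ->
    \bigcup_(j < i.+1) nth set0 (rcons s C) j = \bigcup_(j < i.+1) nth set0 s j.
  by move=> lt_i_s; rewrite !bigcup_nth_take -cats1 takel_cat.
have lastE : cut I (\bigcup_(j < (size s).+1) nth set0 (rcons s C) j)
                   (nth set0 (rcons s C) (size s)) = cut I ((\bigcup_(A <- s) A) :|: C) C.
  by rewrite bigcup_nth_take take_oversize ?size_rcons // bigcup_rcons nth_rcons ltnn eqxx.
split=> [std_sC | [std_s cutC] i].
  split=> [i lt_i_s|]; last by rewrite -lastE; apply: std_sC; rewrite size_rcons.
  by rewrite -nthE -?prefixE //; apply: std_sC; rewrite size_rcons ltnS ltnW.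
rewrite size_rcons ltnS leq_eqVlt => /orP[/eqP -> | lt_i_s]; first by rewrite lastE.
by rewrite nthE ?prefixE //; apply: std_s.
Qed.

End StandardSequences.

Lemma cover_seq (T : finType) (s : seq {set T}) : cover [set A in s] = \bigcup_(A <- s) A.
Proof. by rewrite /cover bigcup_seq; apply: eq_bigl => A; rewrite inE. Qed.

Lemma trivIset_pairwise_disjoint (T : finType) (s : seq {set T}) :
  uniq s -> trivIset [set A in s] -> pairwise_disjoint s.
Proof.
move=> uniq_s trivs; apply/(pairwiseP set0) => i j; rewrite !inE => lt_i lt_j lt_ij.
apply: (trivIsetP trivs); rewrite ?inE ?mem_nth // nth_uniq //.
by rewrite ltn_eqF.
Qed.

Lemma pairwise_disjoint_rcons (T : finType) (s : seq {set T}) C :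
  pairwise_disjoint (rcons s C) ->
  pairwise_disjoint s /\ [disjoint C & \bigcup_(A <- s) A].
Proof.
rewrite pairwise_rcons => /andP[/allP disjC pw_s]; split=> //.
rewrite bigcup_seq; apply: bigcup_disjoint => A /disjC.
by rewrite disjoint_sym.
Qed.

Lemma standard_seq_restrict (T : finType) (I : {set {set T}}) (Z : {set T})
    (t : seq {set T}) : {in t, forall X : {set T}, X \subset Z} ->
  standard_seq I t -> standard_seq (restrict I Z) t.
Proof.
move=> tZ std_t i lt_i_t; rewrite cut_restrict; first exact: std_t.
rewrite bigcup_nth_take bigcup_seq; apply/bigcupsP => X /mem_take.
exact: tZ.
Qed.

Section Traces.
Variables (T : finType) (Z : {set T}).
Implicit Types (s : seq {set T}) (A B C : {set T}).

Definition trace s := [seq A :&: Z | A <- s & ~~ [disjoint A & Z]].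

Lemma trace_rcons s C : trace (rcons s C) =
  if [disjoint C & Z] then trace s else rcons (trace s) (C :&: Z).
Proof. by rewrite /trace filter_rcons; case: [disjoint C & Z] => //=; rewrite map_rcons. Qed.

Lemma bigcup_trace s : \bigcup_(X <- trace s) X = Z :&: \bigcup_(A <- s) A.
Proof.
elim: s => [|A s IHs]; first by rewrite !big_nil setI0.
rewrite /trace /= big_cons setIUr -IHs; case: (boolP [disjoint A & Z]) => /= [AZ|_].
  by rewrite (setIC Z) disjoint_setI0 ?set0U.
by rewrite big_cons (setIC Z).
Qed.

Lemma trace_sub s X : X \in trace s -> X \subset Z.
Proof. by case/mapP => A _ ->; apply: subsetIr. Qed.

Lemma pairwise_disjoint_trace s : pairwise_disjoint s -> pairwise_disjoint (trace s).
Proof.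
move=> pw_s; rewrite /trace pairwise_map; apply: sub_pairwise (pairwise_filter _ pw_s).
by move=> A B /=; apply: disjointW; apply: subsetIl.
Qed.

Lemma trace_neq0 s X : X \in trace s -> X != set0.
Proof. by case/mapP => A; rewrite mem_filter => /andP[meetAZ _] ->; rewrite setI_eq0. Qed.

Lemma uniq_trace s : pairwise_disjoint s -> uniq (trace s).
Proof.
move=> /pairwise_disjoint_trace pw_trace.
apply: (pairwise_uniq (r := [rel X Y : {set T} | [disjoint X & Y] && (X != set0)])).
  by move=> X /=; rewrite -setI_eq0 setIid; case: eqP.
apply: (sub_in_pairwise (P := predC1 set0)) pw_trace; last by apply/allP => X /trace_neq0.
by move=> X Y /= nzX _ ->.
Qed.

End Traces.

Lemma restrict_coloring_seq (T : finType) (s : seq {set T}) Z :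
  restrict_coloring [set A in s] Z = [set X in trace Z s].
Proof.
apply/setP => X; rewrite inE; apply/imsetP/mapP => -[A].
  by rewrite !inE => ? ->; exists A; rewrite // mem_filter andbC.
by rewrite mem_filter => /andP[? ?] ->; exists A; rewrite // !inE; apply/andP.
Qed.

Section TraceOfStandardSequence.
Variables (T : finType) (E : {set T}) (I : {set {set T}}) (Z : {set T}).
Hypothesis matroidEI : is_matroid E I.

Lemma size_trace_le s : pairwise_disjoint s -> standard_seq I s ->
  size (trace Z s) <= rank I (Z :&: \bigcup_(A <- s) A).
Proof.
elim/last_ind: s => [|s C IHs]; first by rewrite big_nil.
move=> /pairwise_disjoint_rcons[pw_s CU] /standard_seq_rcons[std_s cutC].
rewrite trace_rcons bigcup_rcons setIUr (setIC Z C).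
case: ifPn => [disjCZ | meetCZ]; first by rewrite (disjoint_setI0 disjCZ) setU0 IHs.
rewrite size_rcons; apply: leq_ltn_trans (IHs pw_s std_s) _.
by apply: (rank_lt_setU_cut matroidEI CU cutC); rewrite ?subsetIr ?subsetIl ?setI_eq0.
Qed.

Lemma standard_seq_trace s : pairwise_disjoint s -> standard_seq I s ->
  rank I (Z :&: \bigcup_(A <- s) A) = size (trace Z s) -> standard_seq I (trace Z s).
Proof.
elim/last_ind: s => [|s C IHs]; first by move=> *; case.
move=> /pairwise_disjoint_rcons[pw_s CU] /standard_seq_rcons[std_s cutC].
rewrite trace_rcons bigcup_rcons setIUr (setIC Z C).
case: ifPn => [disjCZ | meetCZ].
  by rewrite (disjoint_setI0 disjCZ) setU0; apply: IHs.
set U := \bigcup_(A <- s) A in CU cutC *; rewrite size_rcons => rank_ZUC.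
have lt_ZU_ZUC : rank I (Z :&: U) < rank I (Z :&: U :|: C :&: Z).
  by apply: (rank_lt_setU_cut matroidEI CU cutC); rewrite ?subsetIr ?subsetIl ?setI_eq0.
have rank_ZU : rank I (Z :&: U) = size (trace Z s).
  by have := size_trace_le pw_s std_s; rewrite -/U; lia.
apply/standard_seq_rcons; split; first exact: IHs.
rewrite bigcup_trace; apply: (cut_setU_rank_succ matroidEI CU cutC).
- exact: subsetIr.
- exact: subsetIl.
by rewrite rank_ZUC rank_ZU.
Qed.

End TraceOfStandardSequence.

Section Colorings.
Variables (T : finType) (P : {set {set T}}) (Z : {set T}).

Lemma card_restrict_coloring : trivIset P -> #|restrict_coloring P Z| = #|colors_in P Z|.
Proof.
move=> trivP; transitivity #|(fun A => A :&: Z) @: colors_in P Z|; last apply: card_in_imset.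
  by apply: eq_card => X; apply/imsetP/imsetP => -[A]; rewrite ?inE => ? ->; exists A; rewrite ?inE.
move=> A B; rewrite !inE => /andP[AP meetAZ] /andP[BP _] AZ_BZ; apply: contraNeq meetAZ => neqAB.
rewrite -setI_eq0 -[A :&: Z]setIid {2}AZ_BZ setIACA.
by rewrite (disjoint_setI0 (trivIsetP trivP _ _ AP BP neqAB)) set0I.
Qed.

Lemma partition_restrict_coloring E :
  partition P E -> Z \subset E -> partition (restrict_coloring P Z) Z.
Proof.
move=> /and3P[/eqP coverP trivP P0] ZE; apply/and3P; split.
- apply/eqP/setP => x; apply/bigcupP/idP => [[_ /imsetP[A _ ->] /setIP[]] // | xZ].
  have /bigcupP[A AP xA] : x \in cover P by rewrite coverP (subsetP ZE).
  exists (A :&: Z); last by rewrite inE xA xZ.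
  apply/imsetP; exists A => //; rewrite inE AP /=.
  by apply/negP => /disjointFr/(_ xA); rewrite xZ.
- apply/trivIsetP => _ _ /imsetP[A + ->] /imsetP[B + ->]; rewrite !inE.
  move=> /andP[AP _] /andP[BP _] neqAB.
  apply: disjointW (subsetIl _ _) (subsetIl _ _) _; apply: (trivIsetP trivP) => //.
  by apply: contraNneq neqAB => ->.
apply/imsetP => -[A]; rewrite inE => /andP[_ meetAZ] /esym/eqP.
by rewrite setI_eq0; apply/negP.
Qed.

End Colorings.


Theorem lemma14 (T : finType) (E : {set T}) (I : {set {set T}})
    (P : {set {set T}}) (Z : {set T}) :
  is_matroid E I -> loopless E I ->
  standard_coloring E I P ->
  Z \subset E ->
  #|colors_in P Z| = rank I Z ->
  standard_coloring Z (restrict I Z) (restrict_coloring P Z).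
Proof.
move=> matroidEI _ [partP _ [s [uniq_s defP std_s]]] ZE colorsZ.
have /and3P[/eqP coverP trivP _] := partP.
have pw_s : pairwise_disjoint s.
  by apply: trivIset_pairwise_disjoint; rewrite -?defP.
have cardZ : #|restrict_coloring P Z| = rank I Z by rewrite card_restrict_coloring.
have restrictE : restrict_coloring P Z = [set X in trace Z s].
  by rewrite defP restrict_coloring_seq.
have size_trace : size (trace Z s) = rank I Z.
  by rewrite -(card_uniqP (uniq_trace Z pw_s)) -cardsE -restrictE.
split; first exact: partition_restrict_coloring partP ZE.
  by rewrite cardZ rank_restrict.
exists (trace Z s); split; first exact: uniq_trace.
  exact: restrictE.
apply: standard_seq_restrict; first by move=> X /trace_sub.
apply: (standard_seq_trace matroidEI pw_s std_s).
by rewrite -cover_seq -defP coverP (setIidPl ZE) size_trace.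
Qed.
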